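(* Let $\lambda,n_c,g_+,g_->0$ with $n_c<1$, let $0<\bar c<c_B/2$, set $\alpha=\sqrt{g_-/(g_++g_-)}$, and let $R_{vitro}>0$ be the unique positive root of $$\frac{\bar c}{c_B}\Big(\cosh(\sqrt\lambda R)+\sqrt{n_c}\sinh(\sqrt\lambda R)\Big)-\sqrt{n_c}\sinh\big(\sqrt\lambda(1-\alpha)R\big)-\cosh\big(\sqrt\lambda(1-\alpha)R\big)=0,$$ and $R_{vivo}>0$ the unique solution of $$\frac{c_B}{2}\Big(e^{-\alpha\sqrt\lambda R}+\frac{1-\sqrt{n_c}}{1+\sqrt{n_c}}\,e^{(\alpha-2)\sqrt\lambda R}\Big)=\bar c.$$ Let $\sigma_{vitro}=R_{vitro}\big(\sqrt{(g_++g_-)g_-}-g_-\big)$ and $\sigma_{vivo}=R_{vivo}\big(\sqrt{(g_++g_-)g_-}-g_-\big)$. Then $R_{vivo}\le R_{vitro}$ and $\sigma_{vivo}\le\sigma_{vitro}$.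
   Context: These quantities are the front position and velocity of the explicit traveling waves of the Hele-Shaw tumor model with nutrient, in vitro and in vivo respectively, for the piecewise constant choices $\psi(1)=\lambda$, $\psi(n)=\lambda n_c$ for $0<n<1$, $\psi(0)=0$, and $G(c)=g_+$ for $c>\bar c$, $G(c)=-g_-$ for $c<\bar c$. *)

From Stdlib Require Import Reals Lra.
Open Scope R_scope.

Definition alpha (gp gm : R) : R := sqrt (gm / (gp + gm)).

Definition F_vitro (lam nc gp gm cbar cB x : R) : R :=
  cbar / cB * (cosh (sqrt lam * x) + sqrt nc * sinh (sqrt lam * x))
  - sqrt nc * sinh (sqrt lam * (1 - alpha gp gm) * x)
  - cosh (sqrt lam * (1 - alpha gp gm) * x).

Definition F_vivo (lam nc gp gm cB x : R) : R :=
  cB / 2 * (exp (- alpha gp gm * sqrt lam * x)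
            + (1 - sqrt nc) / (1 + sqrt nc) * exp ((alpha gp gm - 2) * sqrt lam * x)).

Definition sigma_front (gp gm x : R) : R := x * (sqrt ((gp + gm) * gm) - gm).

From Stdlib Require Import Reals Lra Psatz.
Open Scope R_scope.

(* Proof idea.  Write s = sqrt lam, k = sqrt nc, q = (1 - k)/(1 + k).  Expanding
   cosh and sinh into exponentials gives the exact identity

     F_vitro x = (1 + k) e^{s x} / 2 * ( (cbar/cB) (1 + q e^{-2 s x})
                                         - 2 F_vivo x / cB ),

   which ties the in vitro front function to the in vivo one.  At x = Rvivo,
   where F_vivo x = cbar, the bracket is (cbar/cB)(q e^{-2 s x} - 1) < 0, so
   F_vitro Rvivo < 0.  Far away F_vivo decays like cB e^{-alpha s x}, so once it
   drops below cbar/2 the bracket is positive and F_vitro > 0.  By the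
   intermediate value theorem F_vitro has a root beyond Rvivo, which by
   uniqueness is Rvitro; hence Rvivo <= Rvitro.  The velocity statement follows
   because sigma_front is nondecreasing in the radius. *)

Lemma alpha_bounds (gp gm : R) : 0 < gp -> 0 < gm -> 0 < alpha gp gm < 1.
Proof.
  intros Hp Hm. unfold alpha.
  assert (Hfrac : 0 < gm / (gp + gm) < 1).
  { split; [apply Rdiv_lt_0_compat; lra|].
    apply Rmult_lt_reg_r with (gp + gm); [lra|].
    unfold Rdiv; rewrite Rmult_assoc, Rinv_l; lra. }
  split; [apply sqrt_lt_R0; lra|].
  rewrite <- sqrt_1; apply sqrt_lt_1; lra.
Qed.

Lemma reflection_coeff_le_1 (k : R) : 0 <= k -> (1 - k) / (1 + k) <= 1.
Proof.
  intros Hk. apply Rmult_le_reg_r with (1 + k); [lra|].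
  unfold Rdiv; rewrite Rmult_assoc, Rinv_l; lra.
Qed.

Lemma F_vitro_through_F_vivo (lam nc gp gm cbar cB x : R) : cB <> 0 ->
  F_vitro lam nc gp gm cbar cB x =
  (1 + sqrt nc) * exp (sqrt lam * x) / 2 *
  (cbar / cB * (1 + (1 - sqrt nc) / (1 + sqrt nc) * exp (- 2 * sqrt lam * x))
   - 2 * F_vivo lam nc gp gm cB x / cB).
Proof.
  intros HcB. unfold F_vitro, F_vivo, cosh, sinh.
  set (s := sqrt lam); set (a := alpha gp gm); set (k := sqrt nc).
  assert (Hk : 0 <= k) by apply sqrt_pos.
  set (E := exp (s * x)); set (D := exp (s * (1 - a) * x)).
  assert (HE : 0 < E) by apply exp_pos.
  assert (HD : 0 < D) by apply exp_pos.
  assert (H1 : exp (- (s * x)) = / E) by apply exp_Ropp.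
  assert (H2 : exp (- (s * (1 - a) * x)) = / D) by apply exp_Ropp.
  assert (H3 : exp (- a * s * x) = D * / E).
  { rewrite <- H1; unfold D; rewrite <- exp_plus; f_equal; ring. }
  assert (H4 : exp ((a - 2) * s * x) = / D * / E).
  { rewrite <- H1, <- H2; unfold D, E; rewrite <- exp_plus; f_equal; ring. }
  assert (H5 : exp (- 2 * s * x) = / E * / E).
  { rewrite <- H1; unfold E; rewrite <- exp_plus; f_equal; ring. }
  rewrite H1, H2, H3, H4, H5. field; lra.
Qed.

Lemma F_vitro_continuous (lam nc gp gm cbar cB : R) :
  continuity (F_vitro lam nc gp gm cbar cB).
Proof. apply derivable_continuous. unfold F_vitro, cosh, sinh. reg. Qed.

Lemma F_vitro_neg_at_vivo_front (lam nc gp gm cbar cB x : R) :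
  0 < lam -> 0 < cbar -> 0 < cB -> 0 < x ->
  F_vivo lam nc gp gm cB x = cbar -> F_vitro lam nc gp gm cbar cB x < 0.
Proof.
  intros Hl Hc HcB Hx Hvivo.
  rewrite F_vitro_through_F_vivo, Hvivo by lra.
  set (k := sqrt nc); set (s := sqrt lam).
  assert (Hk : 0 <= k) by apply sqrt_pos.
  assert (Hs : 0 < s) by (apply sqrt_lt_R0; lra).
  assert (Hq : (1 - k) / (1 + k) <= 1) by (apply reflection_coeff_le_1; exact Hk).
  assert (Hdecay : 0 < exp (- 2 * s * x) < 1).
  { split; [apply exp_pos|]. rewrite <- exp_0; apply exp_increasing; nra. }
  assert (Hr : 0 < cbar / cB) by (apply Rdiv_lt_0_compat; lra).
  assert (Hbracket : cbar / cB * (1 + (1 - k) / (1 + k) * exp (- 2 * s * x))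
                     - 2 * cbar / cB < 0).
  { assert (Hqe : (1 - k) / (1 + k) * exp (- 2 * s * x) < 1).
    { destruct (Rle_or_lt 0 ((1 - k) / (1 + k))); nra. }
    replace (2 * cbar / cB) with (cbar / cB * 2) by (field; lra). nra. }
  assert (Hfactor : 0 < (1 + k) * exp (s * x) / 2).
  { pose proof (exp_pos (s * x)). apply Rdiv_lt_0_compat; nra. }
  nra.
Qed.

Lemma exp_le_mono (u v : R) : u <= v -> exp u <= exp v.
Proof.
  intros [Huv | Heq]; [left; apply exp_increasing | right; rewrite Heq]; easy.
Qed.

Lemma F_vivo_decay_bound (lam nc gp gm cB x : R) :
  0 <= cB -> alpha gp gm <= 1 -> 0 <= x ->
  F_vivo lam nc gp gm cB x <= cB * exp (- alpha gp gm * sqrt lam * x).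
Proof.
  intros HcB Ha Hx. unfold F_vivo.
  set (s := sqrt lam) in *; set (a := alpha gp gm) in *; set (k := sqrt nc) in *.
  assert (Hk : 0 <= k) by apply sqrt_pos.
  assert (Hs : 0 <= s) by apply sqrt_pos.
  assert (Hq : (1 - k) / (1 + k) <= 1) by (apply reflection_coeff_le_1; exact Hk).
  assert (Hslow : exp ((a - 2) * s * x) <= exp (- a * s * x)).
  { apply exp_le_mono.
    assert (0 <= (1 - a) * (s * x)).
    { apply Rmult_le_pos; [lra | apply Rmult_le_pos; lra]. }
    nra. }
  assert (Hsum : exp (- a * s * x) + (1 - k) / (1 + k) * exp ((a - 2) * s * x)
                 <= 2 * exp (- a * s * x)).
  { pose proof (exp_pos ((a - 2) * s * x)). nra. }
  nra.
Qed.

Lemma F_vitro_pos_when_vivo_small (lam nc gp gm cbar cB x : R) :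
  nc <= 1 -> 0 < cbar -> 0 < cB -> F_vivo lam nc gp gm cB x < cbar / 2 ->
  0 < F_vitro lam nc gp gm cbar cB x.
Proof.
  intros Hn Hc HcB Hsmall.
  rewrite F_vitro_through_F_vivo by lra.
  set (k := sqrt nc).
  assert (Hk : 0 <= k) by apply sqrt_pos.
  assert (Hk1 : k <= 1) by (unfold k; rewrite <- sqrt_1; apply sqrt_le_1_alt; lra).
  assert (Hq : 0 <= (1 - k) / (1 + k))
    by (apply Rmult_le_pos; [lra | apply Rlt_le, Rinv_0_lt_compat; lra]).
  pose proof (exp_pos (- 2 * sqrt lam * x)).
  assert (Hbracket : 0 < cbar / cB * (1 + (1 - k) / (1 + k) * exp (- 2 * sqrt lam * x))
                         - 2 * F_vivo lam nc gp gm cB x / cB).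
  { assert (Hv : 2 * F_vivo lam nc gp gm cB x / cB < cbar / cB).
    { unfold Rdiv; apply Rmult_lt_compat_r; [apply Rinv_0_lt_compat|]; lra. }
    assert (0 <= cbar / cB * ((1 - k) / (1 + k) * exp (- 2 * sqrt lam * x))).
    { apply Rmult_le_pos; [apply Rlt_le, Rdiv_lt_0_compat; lra | nra]. }
    nra. }
  assert (Hfactor : 0 < (1 + k) * exp (sqrt lam * x) / 2).
  { pose proof (exp_pos (sqrt lam * x)). apply Rdiv_lt_0_compat; nra. }
  nra.
Qed.

Lemma exp_decay_below (c eps x0 : R) : 0 < c -> 0 < eps ->
  exists X, x0 < X /\ exp (- c * X) < eps.
Proof.
  intros Hc Heps.
  exists (Rmax x0 (- ln eps / c) + 1). split.
  - pose proof (Rmax_l x0 (- ln eps / c)). lra.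
  - apply Rlt_le_trans with (exp (ln eps)); [| rewrite exp_ln; lra].
    apply exp_increasing.
    pose proof (Rmax_r x0 (- ln eps / c)) as Hmax.
    assert (Hscaled : c * (- ln eps / c) = - ln eps) by (field; lra).
    assert (c * (- ln eps / c) <= c * Rmax x0 (- ln eps / c))
      by (apply Rmult_le_compat_l; lra).
    lra.
Qed.

(* The front velocity is a nonnegative multiple of the front position. *)
Lemma sigma_front_monotone (gp gm x y : R) : 0 <= gp -> 0 <= gm -> x <= y ->
  sigma_front gp gm x <= sigma_front gp gm y.
Proof.
  intros Hp Hm Hxy. unfold sigma_front. apply Rmult_le_compat_r; [|exact Hxy].
  assert (gm <= sqrt ((gp + gm) * gm)).
  { rewrite <- (sqrt_square gm) at 1 by lra. apply sqrt_le_1; nra. }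
  lra.
Qed.

Theorem mainTheorem6 (lam nc gp gm cbar cB Rvitro Rvivo : R) :
  0 < lam -> 0 < nc -> nc < 1 -> 0 < gp -> 0 < gm ->
  0 < cbar -> cbar < cB / 2 ->
  0 < Rvitro -> F_vitro lam nc gp gm cbar cB Rvitro = 0 ->
  (forall x, 0 < x -> F_vitro lam nc gp gm cbar cB x = 0 -> x = Rvitro) ->
  0 < Rvivo -> F_vivo lam nc gp gm cB Rvivo = cbar ->
  (forall x, 0 < x -> F_vivo lam nc gp gm cB x = cbar -> x = Rvivo) ->
  Rvivo <= Rvitro /\ sigma_front gp gm Rvivo <= sigma_front gp gm Rvitro.
Proof.
  intros Hl _ Hn1 Hp Hm Hc HcB _ _ Uvitro Hvivo Fvivo _.
  assert (HcB0 : 0 < cB) by lra.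
  destruct (alpha_bounds gp gm Hp Hm) as [Ha0 Ha1].
  assert (Hs : 0 < sqrt lam) by (apply sqrt_lt_R0; lra).
  assert (Hneg : F_vitro lam nc gp gm cbar cB Rvivo < 0)
    by (apply F_vitro_neg_at_vivo_front; lra).
  destruct (exp_decay_below (alpha gp gm * sqrt lam) (cbar / (2 * cB)) Rvivo)
    as [X [HX Hdecay]]; [nra | apply Rdiv_lt_0_compat; lra |].
  assert (Hpos : 0 < F_vitro lam nc gp gm cbar cB X).
  { apply F_vitro_pos_when_vivo_small; try lra.
    eapply Rle_lt_trans; [apply F_vivo_decay_bound; lra|].
    replace (- alpha gp gm * sqrt lam * X) with (- (alpha gp gm * sqrt lam) * X) by ring.
    replace (cbar / 2) with (cB * (cbar / (2 * cB))) by (field; lra).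
    apply Rmult_lt_compat_l; lra. }
  destruct (IVT _ _ _ (F_vitro_continuous lam nc gp gm cbar cB) HX Hneg Hpos)
    as [z [[Hz1 Hz2] Hz]].
  rewrite <- (Uvitro z) by (lra || exact Hz).
  split; [exact Hz1 | apply sigma_front_monotone; lra].
Qed.
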